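(* Let $n\ge 2$ and let $q\ne 2$ be a prime power. Let $\xi$ be a generator of the multiplicative group ${\rm GF}(q)^\times$. Then ${\rm GL}(n,q)$ is generated by the two matrices $h_1(\xi)=\mathrm{diag}(\xi,1,\dots,1)$ and $x_{12}(1)\,w$, where $x_{12}(1)=I+E_{12}$ and $w$ is the $n\times n$ matrix with entry $1$ in position $(1,n)$, entry $-1$ in positions $(i+1,i)$ for $1\le i\le n-1$, and $0$ elsewhere. Explicitly, $x_{12}(1)w$ has first row $(-1,0,\dots,0,1)$, second row $(-1,0,\dots,0)$, and for $3\le i\le n$ its $i$-th row has $-1$ in column $i-1$ and zeros elsewhere. (For $n=2$ the generators are $\begin{pmatrix}\xi&0\\0&1\end{pmatrix}$ and $\begin{pmatrix}-1&1\\-1&0\end{pmatrix}$.)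
   Context: $E_{ij}$ denotes the square matrix with $1$ in position $(i,j)$ and $0$ elsewhere. For $\alpha\in{\rm GF}(q)$ and $i\ne j$, $x_{ij}(\alpha)=I+\alpha E_{ij}$; $h_i(\alpha)$ is the diagonal matrix obtained from the identity by replacing the $i$-th diagonal entry by $\alpha$. The matrix $w$ equals $w_1w_2\cdots w_{n-1}$, where $w_i$ is the permutation matrix of the transposition $(i,i+1)$ with its $(i+1,i)$ entry replaced by $-1$. *)

From HB Require Import structures.
From mathcomp Require Import all_boot all_order all_algebra all_fingroup all_field.
Set Implicit Arguments. Unset Strict Implicit. Unset Printing Implicit Defensive.
Import GRing.Theory.
Local Open Scope ring_scope.

(* Matrices of size k.+1 (the paper's n is k.+1); indices are 0-based here:
   the paper's index i corresponds to the ordinal with value i-1. *)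
Section Gens.
Variable F : fieldType.
Variable k : nat.

Definition Emx (i j : 'I_k.+1) : 'M[F]_k.+1 := delta_mx i j.
Definition xmx (i j : 'I_k.+1) (a : F) : 'M[F]_k.+1 := 1%:M + a *: Emx i j.
Definition hmx (i : 'I_k.+1) (a : F) : 'M[F]_k.+1 :=
  \matrix_(r, c) (if r == c then (if r == i then a else 1) else 0).
(* w_i (0-based i < k): permutation matrix of the transposition (i, i+1)
   with its (i+1, i) entry replaced by -1 *)
Definition wimx (i : nat) : 'M[F]_k.+1 :=
  \matrix_(r, c)
    (if (r == i :> nat) && (c == i.+1 :> nat) then 1
     else if (r == i.+1 :> nat) && (c == i :> nat) then -1
     else if (r == c) && (r != i :> nat) && (r != i.+1 :> nat) then 1
     else 0).
Definition wmx : 'M[F]_k.+1 := \prod_(i < k) wimx i.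
End Gens.

From HB Require Import structures.
From mathcomp Require Import all_boot all_order all_algebra all_fingroup all_field.
From mathcomp Require Import zify ring.
Set Implicit Arguments. Unset Strict Implicit. Unset Printing Implicit Defensive.
Import GRing.Theory.
Local Open Scope ring_scope.

(* Conjugating h_1(xi) by the second generator g = x_12(1) w gives
   u = x_12(1) h_2(xi) x_12(-1), and h_1(xi) u h_1(xi)^-1 = u x_12((xi - 1)^2).
   As q <> 2, (xi - 1)^2 <> 0, so conjugating by the powers of h_1(xi), i.e. by all
   the h_1(a), yields every x_12(a), hence also w = x_12(-1) g.  Conjugation by w
   shifts indices cyclically up to sign, giving every x_{i,i+1}(a), and the relation
   x_ij(a) x_jl(1) = x_il(a) x_jl(1) x_ij(a) then gives every x_ij(a).  Finally the
   x_ij(a) and the h_1(a) generate GL(n,q), since column reduction with these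
   matrices brings any invertible matrix to the identity. *)

Section ElementaryMatrices.
Variables (F : fieldType) (k : nat).
Local Notation E := (@delta_mx F k.+1 k.+1).
Local Notation e_ t := (@delta_mx F k.+1 1 t 0).
Local Notation W := (wmx F k).
Implicit Types (i j l p : 'I_k.+1) (a b : F) (A : 'M[F]_k.+1).

Lemma sum_delta_l (f : 'I_k.+1 -> F) i : \sum_t (t == i)%:R * f t = f i.
Proof.
by rewrite (bigD1 i) //= eqxx mul1r big1 ?addr0 // => t /negbTE ->; rewrite mul0r.
Qed.

Lemma sum_delta_r (f : 'I_k.+1 -> F) i : \sum_t f t * (t == i)%:R = f i.
Proof. by rewrite -(sum_delta_l f i); apply: eq_bigr => t _; rewrite mulrC. Qed.

Lemma xmxE i j a : xmx i j a = 1 + a *: E i j.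
Proof. by []. Qed.

Lemma hmxE i a : hmx i a = 1 + (a - 1) *: E i i.
Proof.
apply/matrixP => r c; rewrite !mxE.
case: (eqVneq r c) => [<-|rc] /=.
  by case: (eqVneq r i) => ri /=; rewrite ?mulr1 ?mulr0 ?addr0 //; ring.
case: (eqVneq r i) => [ri|ri] /=; last by rewrite mulr0 addr0.
by subst r; rewrite eq_sym (negbTE rc) mulr0 addr0.
Qed.

Lemma delta_mulmxE i p A r c : (E i p *m A) r c = (r == i)%:R * A p c.
Proof.
rewrite !mxE -[A p c](sum_delta_l (A^~ c)) mulr_sumr.
by apply: eq_bigr => t _; rewrite !mxE; case: (r == i); rewrite ?mul1r ?mul0r.
Qed.

Lemma xmx_mulmxE i p a A r c :
  (xmx i p a *m A) r c = A r c + a * ((r == i)%:R * A p c).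
Proof. by rewrite xmxE mulmxDl mul1mx -scalemxAl mxE [in X in _ + X]mxE delta_mulmxE. Qed.

Lemma hmx_mulmxE i a A r c :
  (hmx i a *m A) r c = A r c + (a - 1) * ((r == i)%:R * A i c).
Proof. by rewrite hmxE mulmxDl mul1mx -scalemxAl mxE [in X in _ + X]mxE delta_mulmxE. Qed.

Lemma xmx0 i j : xmx i j (0 : F) = 1.
Proof. by rewrite xmxE scale0r addr0. Qed.

Lemma xmxD i j a b : i != j -> xmx i j (a + b) = xmx i j a *m xmx i j b.
Proof.
move=> ij; rewrite !xmxE mulmxDl !mulmxDr !mul1mx mulmx1 -!scalemxAl -scalemxAr.
rewrite mul_delta_mx_cond eq_sym (negbTE ij) mulr0n !scaler0 addr0.
by rewrite scalerDl [a *: _ + _]addrC addrA.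
Qed.

Lemma hmx1 i : hmx i (1 : F) = 1.
Proof. by rewrite hmxE subrr scale0r addr0. Qed.

Lemma hmxM i a b : hmx i (a * b) = hmx i a *m hmx i b.
Proof.
rewrite !hmxE mulmxDl !mulmxDr !mul1mx mulmx1 -!scalemxAl -scalemxAr mul_delta_mx.
by rewrite scalerA; apply/matrixP => r c; rewrite !mxE; ring.
Qed.

Lemma xmx_unitmx i j a : i != j -> xmx i j a \in unitmx.
Proof. by move=> ij; have := xmxD a (- a) ij; rewrite subrr xmx0 => /esym/mulmx1_unit[]. Qed.

Lemma hmx_unitmx i a : a != 0 -> hmx i a \in unitmx.
Proof. by move=> a0; have := hmxM i a a^-1; rewrite mulfV // hmx1 => /esym/mulmx1_unit[]. Qed.

Lemma xmx_commutator i j l a b : i != j -> j != l -> i != l ->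
  xmx i j a *m xmx j l b = xmx i l (a * b) *m xmx j l b *m xmx i j a.
Proof.
move=> ij jl il; rewrite !xmxE.
rewrite !(mulmxDl, mulmxDr, mul1mx, mulmx1, =^~ scalemxAl, =^~ scalemxAr).
rewrite !mul_delta_mx_cond !eqxx.
rewrite [l == j]eq_sym [l == i]eq_sym (negbTE jl) (negbTE il).
rewrite !mulr0n !mulr1n !mul0mx !scaler0 !addr0.
by apply/matrixP => r c; rewrite !mxE; ring.
Qed.

Section UpperTriangular2.
Variables (i j : 'I_k.+1).
Hypothesis ij : i != j.

(* Products of [xmx i j], [hmx i] and [hmx j] stay in this family, which turns
   identities between them into identities in [F]. *)
Definition utri2 a b c : 'M[F]_k.+1 := 1 + a *: E i i + b *: E i j + c *: E j j.

Lemma utri2M a b c a' b' c' : utri2 a b c *m utri2 a' b' c' =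
  utri2 (a + a' + a * a') (b + b' + a * b' + b * c') (c + c' + c * c').
Proof.
have ji : j != i by rewrite eq_sym.
rewrite /utri2 !mulmxDl !mulmxDr !mul1mx !mulmx1 -!scalemxAl -!scalemxAr !scalerA.
rewrite !mul_delta_mx_cond !eqxx (negbTE ij) (negbTE ji) !mulr0n !mulr1n !scaler0 !addr0.
by apply/matrixP => r s; rewrite !mxE; ring.
Qed.

Lemma xmx_utri2 a : xmx i j a = utri2 0 a 0.
Proof. by rewrite /utri2 !scale0r !addr0. Qed.

Lemma hmx_utri2l a : hmx i a = utri2 (a - 1) 0 0.
Proof. by rewrite hmxE /utri2 !scale0r !addr0. Qed.

Lemma hmx_utri2r a : hmx j a = utri2 0 0 (a - 1).
Proof. by rewrite hmxE /utri2 !scale0r !addr0. Qed.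

End UpperTriangular2.

Definition wsign c : F := if c == k :> nat then 1 else -1.

Lemma wsign2 c : wsign c * wsign c = 1.
Proof. by rewrite /wsign; case: ifP; rewrite ?mulr1 ?mulrNN ?mulr1. Qed.

Lemma col_wimx m c : (m < k)%N -> col c (wimx F k m) =
  if c == m.+1 :> nat then e_ (inZp m)
  else if c == m :> nat then - e_ (inZp m.+1) else e_ c.
Proof.
move=> mk; have m_mod : (m %% k.+1 = m)%N by rewrite modn_small //; lia.
have m1_mod : (m.+1 %% k.+1 = m.+1)%N by rewrite modn_small //; lia.
case: ifP => cm; [|case: ifP => cm']; apply/matrixP => r z;
  rewrite ord1 !mxE -?(inj_eq val_inj) /= ?m_mod ?m1_mod; move: cm; rewrite ?cm' => cm;
  repeat (case: eqP => ? /=); try lia; by rewrite ?oppr0.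
Qed.

Lemma col_prod_wimx m c : (m <= k)%N -> col c (\prod_(i < m) wimx F k i) =
  if (c < m)%N then - e_ (inZp c.+1) else if c == m :> nat then e_ 0 else e_ c.
Proof.
elim: m c => [|m IH] c mk.
  rewrite big_ord0 ltn0 colE mul1mx; case: ifP => // /eqP c0.
  by congr delta_mx; apply: val_inj.
rewrite big_ord_recr /= -mulmxE colE -mulmxA -colE col_wimx //.
have m_mod : (m %% k.+1 = m)%N by rewrite modn_small //; lia.
have m1_mod : (m.+1 %% k.+1 = m.+1)%N by rewrite modn_small //; lia.
case: ifP => [/eqP cm|cm].
  by rewrite -colE IH /= ?m_mod ?ltnn ?eqxx ?cm ?ltnn //; lia.
case: (eqVneq (c : nat) m) => [cm'|cm'].
  rewrite mulmxN -colE IH /= ?m1_mod; last lia.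
  have -> : (m.+1 < m)%N = false by lia.
  have -> : (m.+1 == m) = false by lia.
  by rewrite cm' ltnSn.
rewrite -colE IH; last lia.
have -> : (c < m.+1)%N = (c < m)%N by lia.
by rewrite (negbTE cm').
Qed.

Lemma col_wmx c : col c W = wsign c *: e_ (ordS c).
Proof.
rewrite /wmx col_prod_wimx // /wsign.
case: ifP => ck.
  by rewrite ifF ?scaleN1r //; lia.
have ck' : (c : nat) = k by have := ltn_ord c; lia.
rewrite ifT; last exact/eqP.
rewrite ck' eqxx scale1r; congr delta_mx; apply: val_inj.
by rewrite /= ck' modnn.
Qed.

Lemma wmxE r c : W r c = wsign c * (r == ordS c)%:R.
Proof.
have := congr1 (fun v : 'cV[F]_k.+1 => v r 0) (col_wmx c).
by rewrite !mxE eqxx andbT => ->.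
Qed.

Lemma wmx_delta i j : W *m E i j = wsign i *: E (ordS i) j.
Proof.
by rewrite -(mul_delta_mx (0 : 'I_1)) mulmxA -colE col_wmx -scalemxAl mul_delta_mx.
Qed.

Lemma delta_wmx i j : E i (ordS j) *m W = wsign j *: E i j.
Proof.
rewrite -(mul_delta_mx (0 : 'I_1)) -mulmxA -rowE.
suff -> : row (ordS j) W = wsign j *: delta_mx 0 j by rewrite -scalemxAr mul_delta_mx.
apply/matrixP => z c; rewrite !mxE wmxE (inj_eq (@ordS_inj _)) ord1 eqxx /= eq_sym.
by case: eqVneq => [->|] /=; rewrite ?mulr0 ?mulr1.
Qed.

Lemma wmx_unitmx : W \in unitmx.
Proof.
suff : W^T *m W = 1 by case/mulmx1_unit.
apply/matrixP => r c; rewrite !mxE.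
rewrite (eq_bigr (fun t => (t == ordS r)%:R * (wsign r * wsign c * (t == ordS c)%:R))).
  rewrite sum_delta_l (inj_eq (@ordS_inj _)).
  by case: eqVneq => [->|] /=; rewrite ?wsign2 ?mulr1 ?mulr0.
by move=> t _; rewrite !mxE !wmxE; ring.
Qed.

Lemma wmx_xmx i j a :
  W *m xmx i j a = xmx (ordS i) (ordS j) (wsign i * wsign j * a) *m W.
Proof.
rewrite !xmxE mulmxDr mulmxDl mulmx1 mul1mx -scalemxAr -scalemxAl wmx_delta delta_wmx.
by rewrite !scalerA; congr (_ + _ *: _); rewrite -[LHS]mulr1 -(wsign2 j); ring.
Qed.

Lemma wmx_hmx i a : W *m hmx i a = hmx (ordS i) a *m W.
Proof.
rewrite !hmxE mulmxDr mulmxDl mulmx1 mul1mx -scalemxAr -scalemxAl wmx_delta delta_wmx.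
by rewrite !scalerA mulrC.
Qed.

End ElementaryMatrices.

Section ElementaryGeneration.
Variables (F : finFieldType) (k : nat).
Local Notation E := (@delta_mx F k.+1 k.+1).
Local Notation G := {'GL_k.+1[F]}.
Implicit Types (i j p : 'I_k.+1) (a : F) (A B s : 'M[F]_k.+1).

Definition GLmx A : G := insubd (1%g : G) A.

Lemma GLmxK A : A \in unitmx -> GLval (GLmx A) = A.
Proof. by move=> uA; rewrite /GLmx insubdK. Qed.

Section MatricesOfSubgroup.
Variable H : {group G}.

Definition mx_in A := exists2 g, g \in H & GLval g = A.

Lemma mx_in1 : mx_in 1.
Proof. by exists 1%g. Qed.

Lemma mx_inM A B : mx_in A -> mx_in B -> mx_in (A *m B).
Proof. by case=> g Hg <- [h Hh <-]; exists (g * h)%g; rewrite ?groupM. Qed.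

Lemma mx_inV A : mx_in A -> mx_in (invmx A).
Proof. by case=> g Hg <-; exists g^-1%g; rewrite ?groupV. Qed.

Lemma mx_in_unit A : mx_in A -> A \in unitmx.
Proof. by case=> g _ <-; have := @GL_unitmx k.+1 F g. Qed.

Lemma mx_inMl s A : mx_in s -> mx_in (s *m A) -> mx_in A.
Proof.
by move=> Hs /(mx_inM (mx_inV Hs)); rewrite mulmxA mulVmx ?mul1mx ?mx_in_unit.
Qed.

Lemma mx_in_conj s A : mx_in s -> mx_in A -> mx_in (s *m A *m invmx s).
Proof. by move=> Hs HA; apply: mx_inM (mx_inV Hs); apply: mx_inM. Qed.

Definition id_cols_from (j : nat) A :=
  forall r c : 'I_k.+1, (j <= c)%N -> A r c = (r == c)%:R.

Lemma id_cols_fromM (j : nat) s A :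
  id_cols_from j s -> id_cols_from j A -> id_cols_from j (s *m A).
Proof.
move=> ids idA r c jc; rewrite -ids // !mxE -(sum_delta_r (s r) c).
by apply: eq_bigr => t _; rewrite idA.
Qed.

Lemma id_cols_from_xmx i p a (j : nat) : (p < j)%N -> id_cols_from j (xmx i p a).
Proof.
move=> pj r c jc; have cp : c != p by rewrite -val_eqE neq_ltn (leq_trans pj jc) orbT.
by rewrite xmxE !mxE (negbTE cp) andbF mulr0 addr0.
Qed.

Lemma id_cols_from_hmx i a (j : nat) : (i < j)%N -> id_cols_from j (hmx i a).
Proof.
move=> ij r c jc; have ci : c != i by rewrite -val_eqE neq_ltn (leq_trans ij jc) orbT.
by rewrite hmxE !mxE (negbTE ci) andbF mulr0 addr0.
Qed.

Lemma pivot_exists j A : A \in unitmx -> id_cols_from j.+1 A ->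
  exists2 p : 'I_k.+1, (p <= j)%N & A p j != 0.
Proof.
move=> uA idA.
have [p /andP[pj Apj] | no_pivot] := pickP (fun p : 'I_k.+1 => (p <= j)%N && (A p j != 0)).
  by exists p.
have A0 p : (p <= j)%N -> A p j = 0.
  by move=> pj; apply/eqP; have := no_pivot p; rewrite pj => /negbFE.
pose u : 'cV[F]_k.+1 := \col_t ((t == j)%:R - A t j).
have Au0 : A *m u = 0.
  apply/matrixP => r z; rewrite !mxE.
  rewrite (eq_bigr (fun t => A r t * (t == j)%:R - (t == r)%:R * A t j)).
    by rewrite big_split /= sumrN sum_delta_r sum_delta_l subrr.
  move=> t _; rewrite !mxE mulrBr; congr (_ - _).
  by case: (leqP t j) => tj; [rewrite A0 // !mulr0 | rewrite (idA r t) // eq_sym].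
have /matrixP/(_ j 0) : u = 0 by rewrite -(mulKmx uA u) Au0 mulmx0.
by rewrite !mxE eqxx A0 // subr0 => /eqP; rewrite oner_eq0.
Qed.
Definition col_transvection j (f : 'I_k.+1 -> F) : 'M[F]_k.+1 :=
  1 + \sum_(i | i != j) f i *: E i j.

Lemma col_transvection_mulmxE j f A r c :
  (col_transvection j f *m A) r c = A r c + (r != j)%:R * f r * A j c.
Proof.
rewrite mulmxDl mul1mx mulmx_suml mxE summxE; congr (_ + _).
under eq_bigr do rewrite -scalemxAl mxE delta_mulmxE.
rewrite big_mkcond /= (eq_bigr (fun i => (i == r)%:R * ((i != j)%:R * f i * A j c))).
  by rewrite sum_delta_l.
by move=> i _; rewrite [r == i]eq_sym; case: (i == r) (i != j) => [] [] /=; ring.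
Qed.

Hypothesis H_xmx : forall i j a, i != j -> mx_in (xmx i j a).
Hypothesis H_hmx0 : forall a, a != 0 -> mx_in (hmx 0 a).

Lemma mx_in_col_transvection j f : mx_in (col_transvection j f).
Proof.
rewrite /col_transvection.
suff [] : mx_in (1 + \sum_(i | i != j) f i *: E i j) /\
          E j j *m \sum_(i | i != j) f i *: E i j = 0 by [].
apply: (big_rec (fun T => mx_in (1 + T) /\ E j j *m T = 0)).
  by rewrite addr0 mulmx0; split; first exact: mx_in1.
move=> i T ij [HT jT]; split.
  have iT : E i j *m T = 0 by rewrite -(mul_delta_mx j) -mulmxA jT mulmx0.
  have -> : 1 + (f i *: E i j + T) = xmx i j (f i) *m (1 + T).
    rewrite xmxE mulmxDl mul1mx mulmxDr mulmx1 -scalemxAl iT scaler0 addr0.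
    by rewrite [f i *: _ + _]addrC addrA.
  exact: mx_inM (H_xmx _ ij) HT.
by rewrite mulmxDr jT addr0 -scalemxAr mul_delta_mx_cond eq_sym (negbTE ij) mulr0n scaler0.
Qed.

Section ColumnStep.
Variable j : 'I_k.+1.
Hypothesis IH_id_cols : forall A, A \in unitmx -> id_cols_from j A -> mx_in A.

Lemma mx_in_reduce_step s B : mx_in s -> id_cols_from j.+1 s ->
  B \in unitmx -> id_cols_from j.+1 B ->
  (s *m B \in unitmx -> id_cols_from j.+1 (s *m B) -> mx_in (s *m B)) -> mx_in B.
Proof.
move=> Hs ids uB idB HsB; apply: (mx_inMl Hs); apply: HsB; last exact: id_cols_fromM ids idB.
by rewrite unitmx_mul mx_in_unit.
Qed.

Lemma mx_in_pivot_one B :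
  B \in unitmx -> id_cols_from j.+1 B -> B j j = 1 -> mx_in B.
Proof.
move=> uB idB Bjj.
have HT := mx_in_col_transvection j (fun i => - B i j).
apply: (mx_inMl HT); apply: IH_id_cols; first by rewrite unitmx_mul mx_in_unit.
move=> r c jc; rewrite col_transvection_mulmxE.
have [->|cj] := eqVneq c j.
  by rewrite Bjj mulr1; case: eqVneq => [->|] /=; rewrite ?mul0r ?addr0 ?mul1r ?subrr.
have jc' : (j < c)%N by rewrite ltn_neqAle eq_sym val_eqE cj.
by rewrite idB // (idB j c) // [j == c]eq_sym (negbTE cj) mulr0 addr0.
Qed.

Lemma mx_in_pivot_row0 B :
  B \in unitmx -> id_cols_from j.+1 B -> B 0 j != 0 -> mx_in B.
Proof.
move=> uB idB B0j.
have [j0|j_neq0] := eqVneq j 0.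
  rewrite j0 in B0j.
  have Hh := H_hmx0 (invr_neq0 B0j).
  apply: (mx_in_reduce_step Hh) => // [|uhB idhB].
    by apply: id_cols_from_hmx; rewrite j0.
  by apply: mx_in_pivot_one => //; rewrite j0 hmx_mulmxE eqxx mul1r; field.
have Hx := H_xmx ((1 - B j j) / B 0 j) j_neq0.
apply: (mx_in_reduce_step Hx) => // [|uxB idxB]; first exact: id_cols_from_xmx.
by apply: mx_in_pivot_one => //; rewrite xmx_mulmxE eqxx mul1r mulfVK // addrC subrK.
Qed.

Lemma mx_in_col_step A : A \in unitmx -> id_cols_from j.+1 A -> mx_in A.
Proof.
move=> uA idA; have [A0j|A0j] := eqVneq (A 0 j) 0; last exact: mx_in_pivot_row0.
have [p pj Apj] := pivot_exists uA idA.
have p_neq0 : 0 != p by apply: contraNneq Apj => <-; rewrite A0j.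
apply: (mx_in_reduce_step (H_xmx 1 p_neq0)) => // [|uxA idxA].
  exact: id_cols_from_xmx.
by apply: mx_in_pivot_row0 => //; rewrite xmx_mulmxE eqxx mul1r A0j add0r mul1r.
Qed.
End ColumnStep.

Lemma mx_in_unitmx A : A \in unitmx -> mx_in A.
Proof.
suff mx_in_id_cols (j : nat) :
    (j <= k.+1)%N -> forall A, A \in unitmx -> id_cols_from j A -> mx_in A.
  by move=> uA; apply: (mx_in_id_cols k.+1) => // r c; rewrite leqNgt ltn_ord.
elim: j => [|j IH] jk {}A uA idA.
  suff -> : A = 1 by exact: mx_in1.
  by apply/matrixP => r c; rewrite idA // mxE.
exact: (@mx_in_col_step (Ordinal jk) (IH (ltnW jk))).
Qed.
End MatricesOfSubgroup.

Lemma GL_gen_elementary (H : {group G}) :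
    (forall i j a, i != j -> mx_in H (xmx i j a)) ->
    (forall a, a != 0 -> mx_in H (hmx 0 a)) ->
  H = [set: G] :> {set G}.
Proof.
move=> Hx Hh; apply/eqP; rewrite eqEsubset subsetT; apply/subsetP => g _.
by have [g' Hg' /val_inj <-] := mx_in_unitmx Hx Hh (GL_unitmx g).
Qed.

End ElementaryGeneration.

Lemma ordS_inZp k t : ordS (inZp t : 'I_k.+1) = inZp t.+1.
Proof. by apply: val_inj; rewrite /= -addn1 modnDml addn1. Qed.

Lemma inZp_addn_neq k t d : (0 < d < k.+1)%N -> (inZp t : 'I_k.+1) != inZp (t + d).
Proof.
move=> /andP[d_gt0 dk]; rewrite -val_eqE /= -{1}(addn0 t) eqn_modDl mod0n.
by rewrite modn_small // eq_sym -lt0n.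
Qed.

Lemma inZp_addn_ord k (i j : 'I_k.+1) : i != j ->
  exists2 d, (0 < d < k.+1)%N & inZp (i + d) = j.
Proof.
rewrite -val_eqE /= => /eqP ij; have := ltn_ord i; have := ltn_ord j => jk ik.
have [lt_ij|le_ji] := ltnP i j.
  exists (j - i)%N; first by apply/andP; split; lia.
  by apply: val_inj; rewrite /= subnKC ?modZp // ltnW.
exists (j + k.+1 - i)%N; first by apply/andP; split; lia.
apply: val_inj => /=; have -> : (i + (j + k.+1 - i) = j + k.+1)%N by lia.
by rewrite modnDr modZp.
Qed.

Section TransvectionClosure.
Variables (F : finFieldType) (k : nat) (H : {group {'GL_k.+1[F]}}).
Hypothesis H_wmx : mx_in H (wmx F k).
Implicit Types (i j l : 'I_k.+1).

Definition xmx_all_in i j := forall a, mx_in H (xmx i j a).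

Lemma xmx_all_in_ordS i j : xmx_all_in i j -> xmx_all_in (ordS i) (ordS j).
Proof.
move=> Hij a; set W := wmx F k.
have -> : xmx (ordS i) (ordS j) a = W *m xmx i j (wsign F k i * wsign F k j * a) *m invmx W.
  rewrite wmx_xmx mulmxK ?wmx_unitmx //; congr xmx.
  by rewrite mulrA mulrACA !wsign2 !mul1r.
exact: mx_in_conj H_wmx (Hij _).
Qed.

Lemma xmx_all_in_trans i j l : i != j -> j != l -> i != l ->
  xmx_all_in i j -> xmx_all_in j l -> xmx_all_in i l.
Proof.
move=> ij jl il Hij Hjl a.
have -> : xmx i l a = xmx i j a *m xmx j l 1 *m invmx (xmx j l 1 *m xmx i j a).
  rewrite xmx_commutator // mulr1 -[xmx i l a *m _ *m _]mulmxA mulmxK //.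
  by rewrite unitmx_mul !xmx_unitmx.
by apply: mx_inM; [apply: mx_inM | apply: mx_inV; apply: mx_inM].
Qed.

Hypothesis H_xmx01 : xmx_all_in 0 (ordS 0).

Lemma xmx_all_in_succ t : xmx_all_in (inZp t) (inZp t.+1).
Proof.
elim: t => [|t IH]; first by rewrite -ordS_inZp (_ : inZp 0 = 0) //; apply: val_inj.
by rewrite -!ordS_inZp; apply: xmx_all_in_ordS; rewrite ordS_inZp.
Qed.

Lemma xmx_all_in_addn d t : (0 < d < k.+1)%N -> xmx_all_in (inZp t) (inZp (t + d)).
Proof.
elim: d t => [//|d IH] t /andP[_ dk].
have [->|d_gt0] := posnP d; first by rewrite addn1; exact: xmx_all_in_succ.
apply: (@xmx_all_in_trans _ (inZp (t + d))).
- by apply: inZp_addn_neq; lia.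
- by rewrite addnS -[(t + d).+1]addn1; apply: inZp_addn_neq; lia.
- by apply: inZp_addn_neq; lia.
- by apply: IH; lia.
- by rewrite addnS; exact: xmx_all_in_succ.
Qed.

Lemma xmx_all_in_neq i j : i != j -> xmx_all_in i j.
Proof.
move=> /inZp_addn_ord[d dk <-]; rewrite -{1}(valZpK i).
exact: xmx_all_in_addn.
Qed.

End TransvectionClosure.

Section TwoGenerators.
Variables (F : finFieldType) (k : nat) (xi : {unit F}) (H : {group {'GL_k.+1[F]}}).
Hypothesis k_gt0 : (0 < k)%N.
Hypothesis xi_gen : <[xi]>%g = [set: {unit F}].
Hypothesis card_F_neq2 : #|F| != 2%N.
Local Notation x := (val xi).
Local Notation i1 := (ordS (0 : 'I_k.+1)).
Local Notation W := (wmx F k).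
Hypothesis H_hmx0xi : mx_in H (hmx 0 x).
Hypothesis H_xmxw : mx_in H (xmx 0 i1 1 *m W).

Lemma ordS0_neq0 : (0 : 'I_k.+1) != i1.
Proof. by rewrite -val_eqE /= modn_small //; lia. Qed.

Lemma xi_neq0 : x != 0.
Proof. by rewrite -unitfE (valP xi). Qed.

Lemma xi_neq1 : x != 1.
Proof.
apply: contra card_F_neq2 => /eqP xi1.
have : #|[set: {unit F}]| = 1%N.
  by rewrite -xi_gen (_ : xi = 1%g) ?cycle1 ?cards1 //; exact: val_inj.
by rewrite card_finField_unit; case: #|F| => [|[|[|]]].
Qed.

Lemma mx_in_hmx0 a : a != 0 -> mx_in H (hmx 0 a).
Proof.
move=> a0; pose u : {unit F} := insubd (1%g : {unit F}) a.
have <- : val u = a by rewrite insubdK // unitfE.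
have /cycleP[m ->] : u \in <[xi]>%g by rewrite xi_gen inE.
rewrite FinRing.val_unitX; elim: m => [|m IH]; first by rewrite hmx1; exact: mx_in1.
by rewrite exprS hmxM; exact: mx_inM.
Qed.

Lemma mx_in_xmx01_sqr : mx_in H (xmx 0 i1 ((x - 1) ^+ 2)).
Proof.
pose u := xmx 0 i1 1 *m hmx i1 x *m xmx 0 i1 (-1).
have Hu : mx_in H u.
  have -> : u = (xmx 0 i1 1 *m W) *m hmx 0 x *m invmx (xmx 0 i1 1 *m W).
    apply: (canRL (mulmxK _)); first by rewrite unitmx_mul xmx_unitmx ?ordS0_neq0 ?wmx_unitmx.
    rewrite /u -!mulmxA wmx_hmx (mulmxA (xmx 0 i1 (-1))) -xmxD ?ordS0_neq0 //.
    by rewrite addNr xmx0 mul1mx.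
  exact: mx_in_conj.
have -> : xmx 0 i1 ((x - 1) ^+ 2) = invmx u *m (hmx 0 x *m u *m invmx (hmx 0 x)).
  apply: (canRL (mulKmx _)); first exact: mx_in_unit Hu.
  apply: (canRL (mulmxK _)); first exact: hmx_unitmx xi_neq0.
  rewrite /u (hmx_utri2r 0) !(xmx_utri2 0 i1) (hmx_utri2l 0 i1).
  by rewrite !utri2M ?ordS0_neq0 //; congr utri2; field.
by apply: mx_inM; [exact: mx_inV | exact: mx_in_conj].
Qed.

Lemma mx_in_xmx01 a : mx_in H (xmx 0 i1 a).
Proof.
have c_neq0 : (x - 1) ^+ 2 != 0 by rewrite expf_neq0 // subr_eq0 xi_neq1.
have [->|a0] := eqVneq a 0; first by rewrite xmx0; exact: mx_in1.
pose d := a / (x - 1) ^+ 2.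
have d0 : d != 0 by rewrite mulf_neq0 ?invr_eq0.
have -> : xmx 0 i1 a = hmx 0 d *m xmx 0 i1 ((x - 1) ^+ 2) *m invmx (hmx 0 d).
  apply: (canRL (mulmxK _)); first exact: hmx_unitmx.
  rewrite !(xmx_utri2 0 i1) !(hmx_utri2l 0 i1) !utri2M ?ordS0_neq0 //.
  by congr utri2; rewrite /d; field; rewrite subr_eq0 xi_neq1.
by apply: mx_in_conj; [exact: mx_in_hmx0 | exact: mx_in_xmx01_sqr].
Qed.

Lemma mx_in_wmx : mx_in H W.
Proof.
have -> : W = xmx 0 i1 (-1) *m (xmx 0 i1 1 *m W).
  by rewrite mulmxA -xmxD ?ordS0_neq0 // addNr xmx0 mul1mx.
by apply: mx_inM; [exact: mx_in_xmx01 | exact: H_xmxw].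
Qed.

Lemma GL_gen_hmx_xmxw : H = [set: {'GL_k.+1[F]}] :> {set _}.
Proof.
apply: GL_gen_elementary mx_in_hmx0 => i j a ij.
exact: xmx_all_in_neq mx_in_wmx mx_in_xmx01 i j ij a.
Qed.

End TwoGenerators.

Theorem mainTheorem1 (F : finFieldType) (n : nat) (hn : (2 <= n)%N)
  (hq : #|F| != 2%N) (xi : {unit F})
  (hxi : <[xi]>%g = [set: {unit F}]) :
  exists g1 g2 : {'GL_n[F]},
    GLval g1 = hmx ord0 (val xi) /\
    GLval g2 = xmx ord0 (inord 1) 1 *m wmx F n.-1 /\
    <<[set g1; g2]>>%g = [set: {'GL_n[F]}].
Proof.
case: n hn => [|[|k]] // _.
set h := hmx ord0 (val xi); set g := xmx ord0 (inord 1) 1 *m wmx F k.+1.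
have i1E : inord 1 = ordS (0 : 'I_k.+2) by apply: val_inj; rewrite /= inordK.
have u_h : h \in unitmx := hmx_unitmx _ (xi_neq0 xi).
have u_g : g \in unitmx by rewrite unitmx_mul xmx_unitmx ?i1E ?ordS0_neq0 ?wmx_unitmx.
exists (GLmx h), (GLmx g); rewrite !GLmxK //; do 2!split => //.
apply: (GL_gen_hmx_xmxw (H := <<_>>%G) _ hxi hq); rewrite -?i1E //.
- by exists (GLmx h); rewrite ?GLmxK // mem_gen // !inE eqxx.
- by exists (GLmx g); rewrite ?GLmxK // mem_gen // !inE eqxx orbT.
Qed.
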